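(* Let $r\ge2$, $N\ge r-1$, $d\ge1$ be integers. For any almost $r$-injective function $f\colon\Delta_N\to\mathbb{R}^d$, we have $$\delta(f)\ge\sqrt{2}\cdot\sin\big(\alpha^{(r)}(f)/2\big)\cdot\kappa^{(r)}(f).$$
   Context: $\Delta_N$ is the geometric $N$-simplex. $f$ is almost $r$-injective if for any $r$ pairwise disjoint faces $\sigma_1,\dots,\sigma_r$ of $\Delta_N$, $f(\sigma_1)\cap\dots\cap f(\sigma_r)=\emptyset$. $\mathrm{Conf}_r^{\Delta}(\Delta_N)=\{(x_1,\dots,x_r)\in(\Delta_N)^{\times r}: \text{the } x_i \text{ lie in pairwise disjoint faces}\}$ with the subspace topology. $W_r^{\oplus d}=\{(z_1,\dots,z_r)\in(\mathbb{R}^d)^{\oplus r}: \sum z_i=0\}$, $S(W_r^{\oplus d})$ its unit sphere with geodesic metric $d(u,v)=\arccos\langle u,v\rangle$, $\nu(v)=v/\|v\|$. $\mathrm{Conf}_r^{\Delta}(f)(x_1,\dots,x_r)=\big(f(x_i)-\tfrac1r\sum_jf(x_j)\big)_{i=1}^r$, and $\alpha^{(r)}(f)=\delta(\nu\circ\mathrm{Conf}_r^{\Delta}(f))$. $\kappa^{(r)}(f)=\inf_{(x_1,\dots,x_r)\in\mathrm{Conf}_r^{\Delta}(\Delta_N)}\frac1r\sqrt{\sum_{i,j=1}^r\|f(x_i)-f(x_j)\|^2}$. For a topological space $X$ and metric space $Y$, $\delta(h)=\inf\{\delta\ge 0 : \text{for every } x\in X \text{ there is an open neighborhood } U_x \text{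 with } \operatorname{diam}(h(U_x))\le\delta\}$; $\delta(f)$ uses the Euclidean metric on $\mathbb{R}^d$. *)

From mathcomp Require Import all_boot all_order all_algebra.
From mathcomp Require Import all_classical all_reals all_analysis.
Set Implicit Arguments. Unset Strict Implicit. Unset Printing Implicit Defensive.
Import Order.TTheory GRing.Theory Num.Theory.
Local Open Scope classical_set_scope.
Local Open Scope ring_scope.

Section Defs.
Variable R : realType.

Definition enorm (I : finType) (v : I -> R) : R := Num.sqrt (\sum_(i : I) v i ^+ 2).
Definition enorm2 (I J : finType) (z : I -> J -> R) : R :=
  Num.sqrt (\sum_(i : I) \sum_(j : J) z i j ^+ 2).

Definition edist (I : finType) (u v : I -> R) : R := enorm (fun i => u i - v i).
Definition edist2 (I J : finType) (u v : I -> J -> R) : R :=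
  enorm2 (fun i j => u i j - v i j).

Definition is_open_d (E : Type) (dE : E -> E -> R) (O : set E) : Prop :=
  forall y, O y -> exists e : R, 0 < e /\ forall z, dE y z < e -> O z.

(* For X a subspace (subspace topology) of the metric space (E, dE), a map h
   into a metric space (Y, dY), and c >= 0: every x in X has an open
   neighbourhood U_x = O `&` X in X with diam(h(U_x)) <= c. *)
Definition delta_ok (E Y : Type) (dE : E -> E -> R) (X : set E)
  (dY : Y -> Y -> R) (h : E -> Y) (c : R) : Prop :=
  forall x, X x -> exists O : set E, is_open_d dE O /\ O x /\
    forall y z, X y -> O y -> X z -> O z -> dY (h y) (h z) <= c.

Definition delta (E Y : Type) (dE : E -> E -> R) (X : set E)
  (dY : Y -> Y -> R) (h : E -> Y) : \bar R :=
  ereal_inf [set c%:E | c in [set c : R | 0 <= c /\ delta_ok dE X dY h c]].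

Definition simplex (N : nat) : set ('I_N.+1 -> R) :=
  [set x | (forall i, 0 <= x i) /\ \sum_i x i = 1].

Definition face (N : nat) (S : {set 'I_N.+1}) : set ('I_N.+1 -> R) :=
  [set x | @simplex N x /\ forall i, i \notin S -> x i = 0].

(* r nonempty pairwise disjoint vertex sets, i.e. r pairwise disjoint faces. *)
Definition disjoint_faces (r N : nat) (S : 'I_r -> {set 'I_N.+1}) : Prop :=
  (forall i, S i != finset.set0) /\ (forall i j, i != j -> forall v, v \in S i -> v \notin S j).

Definition almost_r_injective (r N d : nat) (f : ('I_N.+1 -> R) -> ('I_d -> R)) : Prop :=
  forall S : 'I_r -> {set 'I_N.+1}, disjoint_faces S ->
    ~ (exists y : 'I_d -> R, forall i, exists x, face (S i) x /\ f x = y).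

Definition ConfD (r N : nat) : set ('I_r -> 'I_N.+1 -> R) :=
  [set x | exists S : 'I_r -> {set 'I_N.+1}, disjoint_faces S /\ forall i, face (S i) (x i)].

Definition Conff (r N d : nat) (f : ('I_N.+1 -> R) -> ('I_d -> R))
  (x : 'I_r -> 'I_N.+1 -> R) : 'I_r -> 'I_d -> R :=
  fun i k => f (x i) k - (r%:R)^-1 * \sum_(j < r) f (x j) k.

Definition nu (r d : nat) (v : 'I_r -> 'I_d -> R) : 'I_r -> 'I_d -> R :=
  fun i k => v i k / enorm2 v.

Definition geod (r d : nat) (u v : 'I_r -> 'I_d -> R) : R :=
  acos (\sum_i \sum_k u i k * v i k).

Definition delta_f (N d : nat) (f : ('I_N.+1 -> R) -> ('I_d -> R)) : \bar R :=
  delta (@edist _) (@simplex N) (@edist _) f.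

Definition alpha (r N d : nat) (f : ('I_N.+1 -> R) -> ('I_d -> R)) : \bar R :=
  delta (@edist2 _ _) (@ConfD r N) (@geod r d) (fun x => nu (Conff f x)).

Definition kappa (r N d : nat) (f : ('I_N.+1 -> R) -> ('I_d -> R)) : \bar R :=
  ereal_inf [set ((r%:R)^-1 *
      Num.sqrt (\sum_(i < r) \sum_(j < r) edist (f (x i)) (f (x j)) ^+ 2))%:E
    | x in @ConfD r N].

End Defs.
Arguments simplex {R} N.
Arguments ConfD {R} r N.
Arguments alpha {R} r {N d} f.
Arguments kappa {R} r {N d} f.
Arguments delta_f {R N d} f.
Arguments almost_r_injective {R} r {N d} f.

From Pilot Require Import Defs.
From mathcomp Require Import all_boot all_order all_algebra.
From mathcomp Require Import all_classical all_reals all_analysis.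
From mathcomp Require Import ring lra.
Set Implicit Arguments. Unset Strict Implicit. Unset Printing Implicit Defensive.
Import Order.TTheory GRing.Theory Num.Theory.
Local Open Scope ring_scope.

(* Suppose every point of Delta_N has a neighbourhood on which f oscillates by
   at most c.  On a product of such neighbourhoods, two centred configurations
   Conf(f)(y), Conf(f)(z) are at distance at most sqrt r * c, since centring is
   a contraction; and each has norm at least sqrt (r / 2) * kappa, since the
   squared pairwise distances of r points sum to 2r times their squared
   distances to the barycentre.  Two vectors of norm at least m at distance at
   most D make an angle whose cosine is at least 1 - D^2 / (2 m^2), so
   alpha <= acos (1 - c^2 / kappa^2), i.e. 2 sin^2 (alpha / 2) <= c^2 / kappa^2.
   Taking the infimum over c gives the bound on delta(f). *)

Section CentredSums.
Variables (R : realFieldType) (n : nat).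
Implicit Types (w : 'I_n -> R) (m : R).

Lemma sum_sqrB w m :
  \sum_i (w i - m) ^+ 2 = \sum_i w i ^+ 2 - 2 * m * \sum_i w i + n%:R * m ^+ 2.
Proof.
have -> : n%:R * m ^+ 2 = \sum_(i < n) m ^+ 2 by rewrite sumr_const card_ord mulr_natl.
by rewrite mulr_sumr -sumrB -big_split /=; apply: eq_bigr => i _; ring.
Qed.

Lemma sum_sqr_centred w : (0 < n)%N ->
  \sum_i (w i - n%:R^-1 * \sum_j w j) ^+ 2 =
  \sum_i w i ^+ 2 - n%:R^-1 * (\sum_i w i) ^+ 2.
Proof.
move=> n_gt0; have n_neq0 : n%:R != 0 :> R by rewrite pnatr_eq0 -lt0n.
by rewrite sum_sqrB; field.
Qed.

Lemma sum_sqr_centred_le w :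
  \sum_i (w i - n%:R^-1 * \sum_j w j) ^+ 2 <= \sum_i w i ^+ 2.
Proof.
have [n0|n_neq0] := eqVneq (n%:R : R) 0.
  by under eq_bigr do rewrite n0 invr0 mul0r subr0.
rewrite sum_sqr_centred; last by rewrite lt0n -(pnatr_eq0 R).
by rewrite lerBlDr lerDl mulr_ge0 ?sqr_ge0 ?invr_ge0.
Qed.

Lemma sum_sqr_pairwise w : (0 < n)%N ->
  \sum_i \sum_j (w i - w j) ^+ 2 =
  2 * n%:R * \sum_i (w i - n%:R^-1 * \sum_j w j) ^+ 2.
Proof.
move=> n_gt0; have n_neq0 : n%:R != 0 :> R by rewrite pnatr_eq0 -lt0n.
under eq_bigr => i _ do under eq_bigr => j _ do rewrite -sqrrN opprB.
under eq_bigr => i _ do rewrite sum_sqrB.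
rewrite sum_sqr_centred // !big_split /= sumrN sumr_const card_ord.
by rewrite -mulr_suml -!mulr_sumr -mulr_natr; field.
Qed.

End CentredSums.

Section Trigonometry.
Variable R : realType.

Lemma ler_cos : {in `[0, pi] &, {mono (@cos R) : x y /~ x <= y}}.
Proof. by apply: le_nmono_in => x y xI yI; rewrite ltr_cos. Qed.

Lemma acos_antimono (x y : R) : -1 <= x -> x <= y -> y <= 1 -> acos y <= acos x.
Proof.
move=> x_ge xy y_le.
have x_itv : -1 <= x <= 1 by rewrite x_ge (le_trans xy).
have y_itv : -1 <= y <= 1 by rewrite y_le (le_trans x_ge).
by rewrite -ler_cos ?acosK ?in_itv //= acos_ge0 ?acos_lepi.
Qed.

Lemma sqr_sin_half_le (a t : R) : 0 <= a -> a <= acos t -> -1 <= t <= 1 ->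
  2 * sin (a / 2) ^+ 2 <= 1 - t.
Proof.
move=> a_ge0 a_le t_itv.
have t_le : t <= cos a.
  have t_in : t \in `[-1, 1] by rewrite in_itv.
  by rewrite -{1}(acosK t_in) ler_cos ?in_itv //= ?a_ge0
    ?(le_trans a_le) ?acos_ge0 ?acos_lepi.
have cos_half : cos a = 1 - 2 * sin (a / 2) ^+ 2.
  by rewrite {1}(splitr a) -mulr2n cos_mulr2n cos2sin2 mulr2n; ring.
lra.
Qed.

Lemma max_N1_itv (q : R) : 0 <= q -> -1 <= Num.max (-1) (1 - q) <= 1.
Proof.
move=> q_ge0; rewrite le_max lexx ge_max lerBlDr lerDl q_ge0 andbT.
exact: le_trans (lerN10 R) _.
Qed.

Lemma sqrt2_sin_half_le (a k c : R) : 0 < k -> 0 <= c -> 0 <= a ->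
  a <= acos (Num.max (-1) (1 - c ^+ 2 / k ^+ 2)) ->
  Num.sqrt 2 * sin (a / 2) * k <= c.
Proof.
move=> k_gt0 c_ge0 a_ge0 a_le.
have q_ge0 : 0 <= c ^+ 2 / k ^+ 2 by rewrite divr_ge0 ?sqr_ge0.
have := sqr_sin_half_le a_ge0 a_le (max_N1_itv q_ge0).
have : 1 - c ^+ 2 / k ^+ 2 <= Num.max (-1) (1 - c ^+ 2 / k ^+ 2).
  by rewrite le_max lexx orbT.
set s := sin (a / 2) => max_ge sin_le.
have s_le : 2 * s ^+ 2 * k ^+ 2 <= c ^+ 2.
  by rewrite -ler_pdivlMr ?exprn_gt0 //; lra.
have : (Num.sqrt 2 * s * k) ^+ 2 <= c ^+ 2 by rewrite !exprMn sqr_sqrtr.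
nra.
Qed.

End Trigonometry.

Section NestedEuclidean.
Variables (R : realType) (I J : finType).
Implicit Types A B : I -> J -> R.

Lemma sqr_edist (u v : J -> R) : Defs.edist u v ^+ 2 = \sum_j (u j - v j) ^+ 2.
Proof. by rewrite sqr_sqrtr // sumr_ge0 // => j _; exact: sqr_ge0. Qed.

Definition dot2 A B := \sum_i \sum_j A i j * B i j.

Lemma sqr_enorm2 A : enorm2 A ^+ 2 = dot2 A A.
Proof.
rewrite /enorm2 sqr_sqrtr; last by do 2 (apply: sumr_ge0 => ? _); exact: sqr_ge0.
by apply: eq_bigr => i _; apply: eq_bigr => j _; rewrite expr2.
Qed.

Lemma sqr_enorm2_comb A B l m :
  enorm2 (fun i j => l * A i j + m * B i j) ^+ 2 =
  l ^+ 2 * enorm2 A ^+ 2 + m ^+ 2 * enorm2 B ^+ 2 + 2 * l * m * dot2 A B.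
Proof.
rewrite !sqr_enorm2 /dot2 !mulr_sumr -!big_split /=.
apply: eq_bigr => i _; rewrite !mulr_sumr -!big_split /=.
by apply: eq_bigr => j _; ring.
Qed.

Lemma sqr_edist2 A B :
  edist2 A B ^+ 2 = enorm2 A ^+ 2 + enorm2 B ^+ 2 - 2 * dot2 A B.
Proof.
have -> : edist2 A B = enorm2 (fun i j => 1 * A i j + (-1) * B i j).
  by congr enorm2; apply/funext => i; apply/funext => j; rewrite mul1r mulN1r.
by rewrite sqr_enorm2_comb; ring.
Qed.

Lemma dot2_le_enorm2 A B : 0 < enorm2 A -> 0 < enorm2 B ->
  `|dot2 A B| <= enorm2 A * enorm2 B.
Proof.
set a := enorm2 A; set b := enorm2 B => a_gt0 b_gt0.
have ab_gt0 : 0 < a * b by rewrite mulr_gt0.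
have comb_ge0 s : s ^+ 2 = 1 -> 0 <= a * b + s * dot2 A B.
  move=> s2; have := sqr_ge0 (enorm2 (fun i j => b * A i j + s * a * B i j)).
  rewrite sqr_enorm2_comb -/a -/b => h.
  by rewrite -(pmulr_rge0 _ ab_gt0); nra.
have := comb_ge0 1 (expr1n _ _).
have := comb_ge0 (-1); rewrite sqrrN expr1n => /(_ erefl).
by rewrite ler_norml; lra.
Qed.

Lemma dot2_ge_chord A B m D : 0 < m -> m <= enorm2 A ^+ 2 -> m <= enorm2 B ^+ 2 ->
  edist2 A B ^+ 2 <= D -> 1 - D / (2 * m) <= dot2 A B / (enorm2 A * enorm2 B).
Proof.
set a := enorm2 A; set b := enorm2 B => m_gt0 mA mB AB_D.
have a_ge0 : 0 <= a := sqrtr_ge0 _; have b_ge0 : 0 <= b := sqrtr_ge0 _.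
have ab_ge_m : m <= a * b.
  have : m ^+ 2 <= (a * b) ^+ 2 by rewrite exprMn; nra.
  by rewrite ler_sqr ?nnegrE ?mulr_ge0 // ltW.
have ab_gt0 : 0 < a * b := lt_le_trans m_gt0 ab_ge_m.
have q_ge0 : 0 <= D / (2 * m).
  by rewrite divr_ge0 ?(le_trans (sqr_ge0 _) AB_D) // mulr_ge0 // ltW.
have qm : D / (2 * m) * m = D / 2 by field; rewrite gt_eqF.
have q_ab : D / 2 <= D / (2 * m) * (a * b) by rewrite -qm ler_wpM2l.
have amgm : 2 * (a * b) <= a ^+ 2 + b ^+ 2 by have := sqr_ge0 (a - b); lra.
by move: AB_D; rewrite ler_pdivlMr // sqr_edist2 -/a -/b; lra.
Qed.

End NestedEuclidean.

Lemma geod_nu_le (R : realType) (r d : nat) (A B : 'I_r -> 'I_d -> R) (m D : R) :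
  0 < m -> m <= enorm2 A ^+ 2 -> m <= enorm2 B ^+ 2 -> edist2 A B ^+ 2 <= D ->
  geod (nu A) (nu B) <= acos (Num.max (-1) (1 - D / (2 * m))).
Proof.
move=> m_gt0 mA mB AB_D.
have norm_gt0 (V : 'I_r -> 'I_d -> R) : m <= enorm2 V ^+ 2 -> 0 < enorm2 V.
  move=> mV; rewrite lt_def sqrtr_ge0 andbT.
  by apply: contraTneq mV => ->; rewrite expr0n /= -ltNge.
have [a_gt0 b_gt0] := (norm_gt0 _ mA, norm_gt0 _ mB).
have geodE : geod (nu A) (nu B) = acos (dot2 A B / (enorm2 A * enorm2 B)).
  rewrite /geod /nu /dot2 mulr_suml; congr acos; apply: eq_bigr => i _.
  by rewrite mulr_suml; apply: eq_bigr => j _; rewrite invfM; ring.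
have := dot2_le_enorm2 a_gt0 b_gt0; rewrite ler_norml => /andP[lo hi].
have ab_gt0 : 0 < enorm2 A * enorm2 B by rewrite mulr_gt0.
rewrite geodE; apply: acos_antimono.
- by rewrite le_max lexx.
- by rewrite ge_max ler_pdivlMr // mulN1r lo; exact: dot2_ge_chord.
- by rewrite ler_pdivrMr // mul1r.
Qed.

Section ProductNeighbourhoods.
Variables (R : realType) (I J : finType).

Lemma edist_le_edist2 (y z : I -> J -> R) i : Defs.edist (y i) (z i) <= edist2 y z.
Proof.
rewrite ler_sqrt; last by do 2 (apply: sumr_ge0 => ? _); exact: sqr_ge0.
rewrite (bigD1 i) //= lerDl.
by do 2 (apply: sumr_ge0 => ? _); exact: sqr_ge0.
Qed.

Lemma is_open_d_prod (O : I -> set (J -> R)) :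
  (forall i, is_open_d (@Defs.edist R J) (O i)) ->
  is_open_d (@edist2 R I J) (fun z => forall i, O i (z i)).
Proof.
move=> O_open y Oy.
have /choice [e e_spec] : forall i, exists e : R,
    0 < e /\ forall z, Defs.edist (y i) z < e -> O i z.
  by move=> i; exact: O_open.
exists (\big[Order.min/1]_i e i); split.
  by apply: lt_bigmin => // i _; exact: (e_spec i).1.
move=> z yz i; apply: (e_spec i).2.
exact: le_lt_trans (edist_le_edist2 y z i) (lt_le_trans yz (bigmin_le _ _ _)).
Qed.

End ProductNeighbourhoods.

Section Delta.
Variables (R : realType) (E Y : Type) (dE : E -> E -> R) (X : set E).
Variables (dY : Y -> Y -> R) (h : E -> Y).

Lemma delta_ge (b : R) : (forall c, 0 <= c -> delta_ok dE X dY h c -> b <= c) ->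
  (b%:E <= delta dE X dY h)%E.
Proof.
move=> b_le; apply: le_ereal_inf_tmp => _ [c [c0 ok] <-].
by rewrite lee_fin b_le.
Qed.

Lemma fine_delta_le (c : R) : 0 <= c -> delta_ok dE X dY h c ->
  0 <= fine (delta dE X dY h) <= c.
Proof.
move=> c0 ok.
have : (0%:E <= delta dE X dY h)%E by apply: delta_ge.
have : (delta dE X dY h <= c%:E)%E by apply: ereal_inf_lbound; exists c.
by case: (delta dE X dY h) => //= a; rewrite !lee_fin => -> ->.
Qed.

End Delta.

Section Configurations.
Variables (R : realType) (r N d : nat) (f : ('I_N.+1 -> R) -> 'I_d -> R).
Implicit Types (x y z : 'I_r -> 'I_N.+1 -> R) (c : R).

Definition conf_spread (x : 'I_r -> 'I_N.+1 -> R) : R :=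
  r%:R^-1 * Num.sqrt (\sum_i \sum_j Defs.edist (f (x i)) (f (x j)) ^+ 2).

Lemma ConfD_simplex x i : ConfD r N x -> simplex N (x i).
Proof. by case=> S [_ S_faces]; case: (S_faces i). Qed.

Lemma kappa_ge0 : (0 <= kappa r f)%E.
Proof.
apply: le_ereal_inf_tmp => _ [x _ <-].
by rewrite lee_fin mulr_ge0 ?invr_ge0 ?sqrtr_ge0.
Qed.

Lemma fine_kappa_le x : ConfD r N x -> fine (kappa r f) <= conf_spread x.
Proof.
move=> Cx; have : (kappa r f <= (conf_spread x)%:E)%E.
  by apply: ereal_inf_lbound; exists x.
by move: kappa_ge0; case: (kappa r f).
Qed.

Lemma sum_sqr_edist_Conff x : (0 < r)%N ->
  \sum_i \sum_j Defs.edist (f (x i)) (f (x j)) ^+ 2 =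
  2 * r%:R * enorm2 (Conff f x) ^+ 2.
Proof.
move=> r_gt0; under eq_bigr => i _ do under eq_bigr => j _ do rewrite sqr_edist.
under eq_bigr => i _ do rewrite exchange_big.
rewrite exchange_big sqr_enorm2 /dot2 [in RHS]exchange_big mulr_sumr /=.
by apply: eq_bigr => k _; rewrite sum_sqr_pairwise.
Qed.

Lemma enorm2_Conff_ge x (k : R) : (0 < r)%N -> 0 <= k -> k <= conf_spread x ->
  r%:R * k ^+ 2 / 2 <= enorm2 (Conff f x) ^+ 2.
Proof.
move=> r_gt0 k_ge0; have r_pos : 0 < r%:R :> R by rewrite ltr0n.
rewrite /conf_spread sum_sqr_edist_Conff // sqrtrM ?mulr_ge0 ?ler0n //.
rewrite sqrtr_sqr ger0_norm ?sqrtr_ge0 // => k_le.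
have : (r%:R * k) ^+ 2 <= (Num.sqrt (2 * r%:R) * enorm2 (Conff f x)) ^+ 2.
  rewrite ler_sqr ?nnegrE ?mulr_ge0 ?sqrtr_ge0 ?ler0n //.
  by rewrite -ler_pdivlMl // mulrA.
by rewrite !exprMn sqr_sqrtr ?mulr_ge0 ?ler0n // ler_pdivrMr //; nra.
Qed.

Lemma edist2_Conff_le y z c : (forall i, Defs.edist (f (y i)) (f (z i)) <= c) ->
  edist2 (Conff f y) (Conff f z) ^+ 2 <= r%:R * c ^+ 2.
Proof.
move=> yz_le.
have ConffB i k : Conff f y i k - Conff f z i k =
    (f (y i) k - f (z i) k) - r%:R^-1 * \sum_j (f (y j) k - f (z j) k).
  by rewrite /Conff sumrB; ring.
rewrite sqr_sqrtr; last by do 2 (apply: sumr_ge0 => ? _); exact: sqr_ge0.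
under eq_bigr => i _ do under eq_bigr => k _ do rewrite ConffB.
rewrite exchange_big.
apply: le_trans (ler_sum _ (fun k _ =>
  sum_sqr_centred_le (fun i => f (y i) k - f (z i) k))) _.
rewrite exchange_big /=.
have -> : r%:R * c ^+ 2 = \sum_(i < r) c ^+ 2 by rewrite sumr_const card_ord mulr_natl.
apply: ler_sum => i _; rewrite -sqr_edist.
have := yz_le i; have : 0 <= Defs.edist (f (y i)) (f (z i)) := sqrtr_ge0 _.
nra.
Qed.

Lemma delta_ok_Conff_componentwise c :
  delta_ok (@Defs.edist R _) (simplex N) (@Defs.edist R _) f c ->
  forall x, ConfD r N x -> exists O, [/\ is_open_d (@edist2 R _ _) O, O x &
    forall y z, ConfD r N y -> O y -> ConfD r N z -> O z ->
      forall i, Defs.edist (f (y i)) (f (z i)) <= c].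
Proof.
move=> f_ok x Cx.
have /choice [Os Os_spec] : forall i, exists O,
    [/\ is_open_d (@Defs.edist R _) O, O (x i) & forall u v,
      simplex N u -> O u -> simplex N v -> O v -> Defs.edist (f u) (f v) <= c].
  by move=> i; have [U [? [? ?]]] := f_ok _ (ConfD_simplex i Cx); exists U.
exists (fun z => forall i, Os i (z i)); split.
- by apply: is_open_d_prod => i; case: (Os_spec i).
- by move=> i; case: (Os_spec i).
- move=> y z Cy Oy Cz Oz i; case: (Os_spec i) => _ _; apply.
  all: by [exact: ConfD_simplex | exact: Oy | exact: Oz].
Qed.

Lemma delta_ok_nu_Conff (k : R) c : (0 < r)%N -> 0 < k ->
  (forall x, ConfD r N x -> k <= conf_spread x) ->
  delta_ok (@Defs.edist R _) (simplex N) (@Defs.edist R _) f c ->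
  delta_ok (@edist2 R _ _) (ConfD r N) (@geod R r d) (fun x => nu (Conff f x))
    (acos (Num.max (-1) (1 - c ^+ 2 / k ^+ 2))).
Proof.
move=> r_gt0 k_gt0 k_le f_ok x Cx.
have [U [U_open Ux U_diam]] := delta_ok_Conff_componentwise f_ok Cx.
exists U; do 2 split => //; move=> y z Cy Uy Cz Uz.
have r_pos : 0 < r%:R :> R by rewrite ltr0n.
have m_gt0 : 0 < r%:R * k ^+ 2 / 2 by rewrite !mulr_gt0 ?exprn_gt0.
(* [r c^2] bounds the squared distance of the centred configurations and
   [r k^2 / 2] their squared norms. *)
have -> : c ^+ 2 / k ^+ 2 = r%:R * c ^+ 2 / (2 * (r%:R * k ^+ 2 / 2)).
  by field; rewrite !gt_eqF ?exprn_gt0.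
apply: geod_nu_le m_gt0 _ _ (edist2_Conff_le (U_diam _ _ Cy Uy Cz Uz)).
- exact: enorm2_Conff_ge (ltW k_gt0) (k_le _ Cy).
- exact: enorm2_Conff_ge (ltW k_gt0) (k_le _ Cz).
Qed.

End Configurations.

Theorem theorem4p13 (R : realType) (r N d : nat)
  (hr : (2 <= r)%N) (hN : (r.-1 <= N)%N) (hd : (1 <= d)%N)
  (f : ('I_N.+1 -> R) -> ('I_d -> R)) :
  almost_r_injective r f ->
  ((Num.sqrt 2 * sin (fine (alpha r f) / 2) * fine (kappa r f))%:E
     <= delta_f f)%E.
Proof.
move=> _.
have r_gt0 : (0 < r)%N by exact: leq_trans hr.
apply: delta_ge => c c_ge0 f_ok.
have k_ge0 : 0 <= fine (kappa r f) := fine_ge0 (kappa_ge0 r f).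
have [->|k_neq0] := eqVneq (fine (kappa r f)) 0; first by rewrite mulr0.
have k_gt0 : 0 < fine (kappa r f) by rewrite lt_def k_neq0.
have alpha_ok := delta_ok_nu_Conff r_gt0 k_gt0 (@fine_kappa_le _ _ _ _ f) f_ok.
have q_ge0 : 0 <= c ^+ 2 / fine (kappa r f) ^+ 2 by rewrite divr_ge0 ?sqr_ge0.
have /andP[a_ge0 a_le] := fine_delta_le (acos_ge0 (max_N1_itv q_ge0)) alpha_ok.
exact: sqrt2_sin_half_le.
Qed.
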